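(* Let $P=K\overline{K}$ and $Q=L\overline{L}$ in $U_{K,L,norm}$. Then $P$ and $Q$ are central idempotents, $PQ=QP=0$, and $U_{K,L,norm}=PU_{K,L,norm}P\oplus QU_{K,L,norm}Q$ is a direct sum of two two-sided ideals. Moreover there is an algebra isomorphism $U_{K,L,norm}\to U_q(sl_2)\oplus U_q(sl_2)$ given by $K\mapsto k\oplus0$, $\overline{K}\mapsto k^{-1}\oplus0$, $PE\mapsto e\oplus0$, $PF\mapsto f\oplus0$, $L\mapsto0\oplus k$, $\overline{L}\mapsto0\oplus k^{-1}$, $QE\mapsto0\oplus e$, $QF\mapsto0\oplus f$ (so $P\mapsto\mathbf{1}\oplus0$, $Q\mapsto0\oplus\mathbf{1}$).
   Context: Fix $q\in\mathbb{C}$, $q\neq 0,\pm1$. $U_q(sl_2)$ is the unital associative $\mathbb{C}$-algebra generated by $k,k^{-1},e,f$ with relations $kk^{-1}=k^{-1}k=\mathbf{1}$, $ke=q^2ek$, $kf=q^{-2}fk$, $ef-fe=(k-k^{-1})/(q-q^{-1})$. $U_{K,L,norm}$ is the unital associative $\mathbb{C}$-algebra generated by $K,\overline{K},L,\overline{L},E,F$ subject to $K\overline{K}K=K$, $\overline{K}K\overline{K}=\overline{K}$, $K\overline{K}=\overline{K}K$, $L\overline{L}L=L$, $\overline{L}L\overline{L}=\overline{L}$, $L\overline{L}=\overline{L}L$, $K\overline{K}+L\overline{L}=\mathbf{1}$, $KE=q^2EK$, $LE=q^2EL$, $\overline{K}E=q^{-2}E\overline{K}$, $\overline{L}E=q^{-2}E\overline{L}$,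 $KF=q^{-2}FK$, $LF=q^{-2}FL$, $\overline{K}F=q^2F\overline{K}$, $\overline{L}F=q^2F\overline{L}$, $EF-FE=\frac{(K+L)-(\overline{K}+\overline{L})}{q-q^{-1}}$. *)

From HB Require Import structures.
From mathcomp Require Import all_boot all_order all_algebra.
Set Implicit Arguments. Unset Strict Implicit. Unset Printing Implicit Defensive.
Import GRing.Theory.
Local Open Scope ring_scope.

Definition Uq_rel (F : fieldType) (q : F) (B : algType F) (k ki e f : B) : Prop :=
  [/\ k * ki = 1, ki * k = 1,
      k * e = q ^+ 2 *: (e * k),
      k * f = q ^- 2 *: (f * k)
    & e * f - f * e = (q - q^-1)^-1 *: (k - ki)].

(* U is (a model of) U_q(sl_2): the algebra presented by generators k, ki, e, f and
   the relations Uq_rel, characterised by its universal property. *)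
Definition is_Uq (F : fieldType) (q : F) (U : algType F) (k ki e f : U) : Prop :=
  Uq_rel q k ki e f /\
  forall (B : algType F) (k' ki' e' f' : B), Uq_rel q k' ki' e' f' ->
    (exists phi : {lrmorphism U -> B},
        [/\ phi k = k', phi ki = ki', phi e = e' & phi f = f']) /\
    (forall phi psi : {lrmorphism U -> B},
        [/\ phi k = k', phi ki = ki', phi e = e' & phi f = f'] ->
        [/\ psi k = k', psi ki = ki', psi e = e' & psi f = f'] ->
        forall x, phi x = psi x).

(* Defining relations of U_{K,L,norm}; Kb, Lb stand for \overline{K}, \overline{L}. *)
Definition UKL_rel (F : fieldType) (q : F) (B : algType F) (K Kb L Lb E Fg : B) : Prop :=
  [/\ [/\ K * Kb * K = K, Kb * K * Kb = Kb & K * Kb = Kb * K] /\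
      [/\ L * Lb * L = L, Lb * L * Lb = Lb & L * Lb = Lb * L],
      K * Kb + L * Lb = 1,
      [/\ K * E = q ^+ 2 *: (E * K), L * E = q ^+ 2 *: (E * L),
          Kb * E = q ^- 2 *: (E * Kb) & Lb * E = q ^- 2 *: (E * Lb)],
      [/\ K * Fg = q ^- 2 *: (Fg * K), L * Fg = q ^- 2 *: (Fg * L),
          Kb * Fg = q ^+ 2 *: (Fg * Kb) & Lb * Fg = q ^+ 2 *: (Fg * Lb)]
    & E * Fg - Fg * E = (q - q^-1)^-1 *: ((K + L) - (Kb + Lb))].

Definition is_UKL (F : fieldType) (q : F) (A : algType F) (K Kb L Lb E Fg : A) : Prop :=
  UKL_rel q K Kb L Lb E Fg /\
  forall (B : algType F) (K' Kb' L' Lb' E' F' : B), UKL_rel q K' Kb' L' Lb' E' F' ->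
    (exists phi : {lrmorphism A -> B},
        [/\ phi K = K', phi Kb = Kb', phi L = L', phi Lb = Lb' & (phi E = E' /\ phi Fg = F')]) /\
    (forall phi psi : {lrmorphism A -> B},
        [/\ phi K = K', phi Kb = Kb', phi L = L', phi Lb = Lb' & (phi E = E' /\ phi Fg = F')] ->
        [/\ psi K = K', psi Kb = Kb', psi L = L', psi Lb = Lb' & (psi E = E' /\ psi Fg = F')] ->
        forall x, phi x = psi x).

Definition in_corner (R : pzRingType) (P x : R) : Prop := exists y, x = P * y * P.

Definition two_sided_ideal (R : pzRingType) (S : R -> Prop) : Prop :=
  [/\ S 0, (forall x y, S x -> S y -> S (x + y)),
      (forall a x, S x -> S (a * x)) & (forall a x, S x -> S (x * a))].

From HB Require Import structures.
From mathcomp Require Import all_boot all_order all_algebra.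
Set Implicit Arguments. Unset Strict Implicit. Unset Printing Implicit Defensive.
Import GRing.Theory Num.Theory.
Local Open Scope ring_scope.

(* Write P = K Kb and Q = L Lb.  The defining relations alone show that P is an
   idempotent with complement Q = 1 - P, that P absorbs K and Kb and kills L and
   Lb, and that P commutes with E and F (the q-powers contributed by K and Kb
   cancel).  So P commutes with every generator; conjugation by the involution
   P - Q then fixes all generators, hence is the identity by the uniqueness half
   of the universal property, and since 2 is invertible P is central.  Centrality
   yields the decomposition A = PAP (+) QAQ into two-sided ideals.

   For the isomorphism, the universal property of A gives phi : A -> U x U with
   K |-> (k,0), L |-> (0,k), E |-> (e,e), F |-> (f,f).  The corner elements
   K + Q, Kb + Q, PE, PF satisfy the U_q(sl_2) relations, giving a1 : U -> A, and
   symmetrically a2 from the Q-corner; the glued map (u,v) |-> a1 u P + a2 v Q is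
   a two-sided inverse of phi, both composites being identified with identities
   through the uniqueness clauses of the two universal properties. *)

Definition central (R : pzRingType) (c : R) : Prop := forall x, c * x = x * c.

Section Complement.
Variables (R : pzRingType) (P Q : R).
Hypotheses (PP : P * P = P) (PQ1 : P + Q = 1).

Lemma compl_eq : Q = 1 - P.
Proof. by rewrite -PQ1 addrC addKr. Qed.

Lemma compl_idem : Q * Q = Q.
Proof. by rewrite compl_eq mulrBl mul1r mulrBr mulr1 PP subrr subr0. Qed.

Lemma compl_orth_l : P * Q = 0.
Proof. by rewrite compl_eq mulrBr mulr1 PP subrr. Qed.

Lemma compl_orth_r : Q * P = 0.
Proof. by rewrite compl_eq mulrBl mul1r PP subrr. Qed.

Lemma compl_annihilates x : P * x = x -> x * P = x -> Q * x = 0 /\ x * Q = 0.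
Proof.
move=> Px xP; split.
  by rewrite -Px mulrA compl_orth_r mul0r.
by rewrite -xP -mulrA compl_orth_l mulr0.
Qed.

Lemma central_compl : central P -> central Q.
Proof. by move=> Pc x; rewrite compl_eq mulrBl mulrBr mul1r mulr1 Pc. Qed.

Lemma reflection_sqr : (P - Q) * (P - Q) = 1.
Proof.
by rewrite mulrBl !mulrBr PP compl_idem compl_orth_l compl_orth_r subr0 sub0r opprK.
Qed.

Lemma reflection_commute x : GRing.comm P x -> GRing.comm (P - Q) x.
Proof.
by move=> Px; rewrite /GRing.comm mulrBl mulrBr Px compl_eq mulrBl mulrBr mul1r mulr1 Px.
Qed.

End Complement.

(* Conversely, since P - Q = 2P - 1, commuting with P - Q gives commuting
   with P as soon as 2 is invertible. *)
Lemma commute_of_reflection (F : fieldType) (A : algType F) (P Q x : A) :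
  P + Q = 1 -> (2%:R : F) != 0 -> GRing.comm (P - Q) x -> GRing.comm P x.
Proof.
move=> PQ1 two; have compl_eq := compl_eq PQ1.
rewrite /GRing.comm compl_eq !mulrBl !mulrBr mul1r mulr1.
rewrite !opprB !addrA => /addIr; rewrite -!mulr2n -!scaler_nat.
by move/(congr1 (fun y => 2%:R^-1 *: y)); rewrite !scalerA mulVf // !scale1r.
Qed.

Section Corners.
Variables (F : fieldType) (A : algType F).

Lemma corner_central (R : A) : central R -> R * R = R ->
  forall y, R * y * R = R * y.
Proof. by move=> Rc RR y; rewrite -mulrA -Rc mulrA RR. Qed.

Lemma corner_ideal (R : A) : central R -> R * R = R -> two_sided_ideal (in_corner R).
Proof.
move=> Rc RR; have cR := corner_central Rc RR; split.
- by exists 0; rewrite mulr0 mul0r.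
- by move=> x y [a ->] [b ->]; exists (a + b); rewrite mulrDr mulrDl.
- by move=> a x [y ->]; exists (a * y); rewrite !cR mulrA -Rc -mulrA.
- by move=> a x [y ->]; exists (y * a); rewrite !cR mulrA.
Qed.

Lemma corner_decomposition (P Q : A) : central P -> P * P = P -> P + Q = 1 ->
  forall x : A, exists! yz : (A * A)%type,
    [/\ in_corner P yz.1, in_corner Q yz.2 & x = yz.1 + yz.2].
Proof.
move=> Pc PP PQ1 x.
have Qc := central_compl PQ1 Pc; have QQ := compl_idem PP PQ1.
have cP := corner_central Pc PP; have cQ := corner_central Qc QQ.
exists (P * x, Q * x); split.
  split; [by exists x; rewrite cP | by exists x; rewrite cQ |].
  by rewrite -mulrDl PQ1 mul1r.
have PQ := compl_orth_l PP PQ1; have QP := compl_orth_r PP PQ1.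
move=> [y z] /= [[a ->] [b ->] ->].
congr (_, _); rewrite ?cP ?cQ mulrDr !mulrA.
  by rewrite PP PQ mul0r addr0.
by rewrite QQ QP mul0r add0r.
Qed.

End Corners.

Section Conjugation.
Variables (F : fieldType) (A : algType F) (u v : A).
Hypotheses (uv : u * v = 1) (vu : v * u = 1).

Definition conjugation (x : A) : A := u * x * v.

Lemma conjugation_linear : linear conjugation.
Proof. by move=> a x y; rewrite /conjugation mulrDr mulrDl -scalerAr -scalerAl. Qed.

Lemma conjugation_monoid_morphism : monoid_morphism conjugation.
Proof.
split; first by rewrite /conjugation mulr1 uv.
by move=> x y; rewrite /conjugation !mulrA -(mulrA _ v u) vu mulr1.
Qed.

HB.instance Definition _ :=
  GRing.isLinear.Build F A A *:%R conjugation conjugation_linear.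
HB.instance Definition _ :=
  GRing.isMonoidMorphism.Build A A conjugation conjugation_monoid_morphism.

Definition conjugation_lrmorphism : {lrmorphism A -> A} := conjugation.

Lemma conjugation_fixes x : GRing.comm u x -> conjugation x = x.
Proof. by move=> ux; rewrite /conjugation ux -mulrA uv mulr1. Qed.

End Conjugation.

Section Glue.
Variables (F : fieldType) (A U : algType F) (P Q : A).
Hypotheses (Pc : central P) (PP : P * P = P) (PQ1 : P + Q = 1).
Variables (a1 a2 : {lrmorphism U -> A}).

Definition glue (z : (U * U)%type) : A := a1 z.1 * P + a2 z.2 * Q.

Lemma glue_linear : linear glue.
Proof.
move=> a [x1 x2] [y1 y2]; rewrite /glue /= !linearP /= !mulrDl -!scalerAl.
by rewrite scalerDr addrACA.
Qed.

Lemma glue_monoid_morphism : monoid_morphism glue.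
Proof.
have Qc := central_compl PQ1 Pc; have QQ := compl_idem PP PQ1.
have PQ := compl_orth_l PP PQ1; have QP := compl_orth_r PP PQ1.
split; first by rewrite /glue /= !rmorph1 !mul1r.
have move_central (R : A) : central R -> forall S x y, x * R * (y * S) = x * y * (R * S).
  by move=> Rc S x y; rewrite mulrA -(mulrA x R y) Rc !mulrA -mulrA.
move=> [x1 x2] [y1 y2]; rewrite /glue /= !rmorphM /= mulrDl !mulrDr.
by rewrite !(move_central P Pc) !(move_central Q Qc) PP QQ PQ QP !mulr0 addr0 add0r.
Qed.
HB.instance Definition _ :=
  GRing.isLinear.Build F (U * U)%type A *:%R glue glue_linear.
HB.instance Definition _ :=
  GRing.isMonoidMorphism.Build (U * U)%type A glue glue_monoid_morphism.

Definition glue_lrmorphism : {lrmorphism (U * U)%type -> A} := glue.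

End Glue.

Section QCommutation.
Variables (F : fieldType) (A : algType F) (c : F).
Hypothesis c_neq0 : c != 0.

Lemma inv_qcomm (k ki x : A) : k * ki = 1 -> ki * k = 1 ->
  k * x = c *: (x * k) -> ki * x = c^-1 *: (x * ki).
Proof.
move=> kki kik kx.
have xk : x * k = c^-1 *: (k * x) by rewrite kx scalerA mulVf // scale1r.
rewrite -[ki * x]mulr1 -kki mulrA -(mulrA ki) xk -scalerAr -scalerAl.
by rewrite !mulrA kik mul1r.
Qed.

Lemma qcomm_product (a b x : A) : a * x = c *: (x * a) -> b * x = c^-1 *: (x * b) ->
  GRing.comm (a * b) x.
Proof.
move=> ax bx; rewrite /GRing.comm -mulrA bx -scalerAr !mulrA ax -scalerAl scalerA.
by rewrite mulVf // scale1r.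
Qed.

End QCommutation.

Section UKLRelations.
Variables (F : fieldType) (q : F) (A : algType F) (K Kb L Lb E Fg : A).
Hypotheses (q_neq0 : q != 0) (rel : UKL_rel q K Kb L Lb E Fg).
Local Notation P := (K * Kb).
Local Notation Q := (L * Lb).

(* The relations are symmetric under exchanging (K, Kb) with (L, Lb); this
   transfers every statement about P to Q. *)
Lemma UKL_rel_swap : UKL_rel q L Lb K Kb E Fg.
Proof.
case: rel => [[idemK idemL] sum [KE LE KbE LbE] [KF LF KbF LbF] EF].
by split => //; [rewrite addrC | rewrite EF (addrC L) (addrC Lb)].
Qed.

Lemma UKL_sum : P + Q = 1.
Proof. by case: rel. Qed.

Lemma UKL_idem : P * P = P.
Proof. by case: rel => [[[KKbK _ _] _] _ _ _ _]; rewrite mulrA KKbK. Qed.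

Lemma UKL_absorb : [/\ P * K = K, K * P = K, P * Kb = Kb & Kb * P = Kb].
Proof.
case: rel => [[[KKbK KbKKb comm] _] _ _ _ _].
split=> //; first by rewrite comm mulrA KKbK.
  by rewrite comm KbKKb.
by rewrite mulrA KbKKb.
Qed.

(* P commutes with E and F: the factors q^2 and q^-2 from K and Kb cancel. *)
Lemma UKL_comm_E : GRing.comm P E.
Proof.
case: rel => _ _ [KE _ KbE _] _ _.
by apply: (qcomm_product _ KE); rewrite ?expf_neq0 // KbE.
Qed.

Lemma UKL_comm_F : GRing.comm P Fg.
Proof.
case: rel => _ _ _ [KF _ KbF _] _.
by apply: (qcomm_product _ KF); rewrite ?invr_neq0 ?expf_neq0 // invrK KbF.
Qed.

End UKLRelations.

Section UKLCorner.
Variables (F : fieldType) (q : F) (A : algType F) (K Kb L Lb E Fg : A).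
Hypotheses (q_neq0 : q != 0) (rel : UKL_rel q K Kb L Lb E Fg).
Local Notation P := (K * Kb).
Local Notation Q := (L * Lb).

(* P kills L and Lb on both sides, since Q absorbs them. *)
Lemma UKL_annihilate_L : [/\ P * L = 0, L * P = 0, P * Lb = 0 & Lb * P = 0].
Proof.
have rel' := UKL_rel_swap rel.
have [QL LQ QLb LbQ] := UKL_absorb rel'.
have [PL LP] := compl_annihilates (UKL_idem rel') (UKL_sum rel') QL LQ.
by have [PLb LbP] := compl_annihilates (UKL_idem rel') (UKL_sum rel') QLb LbQ.
Qed.

Lemma UKL_comm_gens : [/\ GRing.comm P K, GRing.comm P Kb, GRing.comm P L,
  GRing.comm P Lb & GRing.comm P E /\ GRing.comm P Fg].
Proof.
have [PK KP PKb KbP] := UKL_absorb rel; have [PL LP PLb LbP] := UKL_annihilate_L.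
split; rewrite /GRing.comm ?PK ?KP ?PKb ?KbP ?PL ?LP ?PLb ?LbP //.
by split; [exact: UKL_comm_E q_neq0 rel | exact: UKL_comm_F q_neq0 rel].
Qed.

Lemma UKL_corner_rel : central P -> Uq_rel q (K + Q) (Kb + Q) (P * E) (P * Fg).
Proof.
move=> Pc.
have [PK KP PKb KbP] := UKL_absorb rel; have [PL LP PLb LbP] := UKL_annihilate_L.
have PP := UKL_idem rel; have PQ1 := UKL_sum rel.
have [QK KQ] := compl_annihilates PP PQ1 PK KP.
have [QKb KbQ] := compl_annihilates PP PQ1 PKb KbP.
have QQ := compl_idem PP PQ1; have QP := compl_orth_r PP PQ1.
have PQ := compl_orth_l PP PQ1.
case: rel => [[[_ _ KKb] _] _ [KE _ _ _] [KF _ _ _] EF].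
split.
- by rewrite mulrDl !mulrDr KQ QKb QQ addr0 add0r.
- by rewrite mulrDl !mulrDr -KKb KbQ QK QQ addr0 add0r.
- rewrite mulrDl (mulrA K) (mulrA Q) KP QP mul0r addr0 KE (Pc E).
  by rewrite -mulrA mulrDr PK PQ addr0.
- rewrite mulrDl (mulrA K) (mulrA Q) KP QP mul0r addr0 KF (Pc Fg).
  by rewrite -mulrA mulrDr PK PQ addr0.
have corner_mul x y : P * x * (P * y) = P * (x * y).
  by rewrite mulrA (corner_central Pc PP) -mulrA.
rewrite !corner_mul -mulrBr EF -scalerAr mulrBr !mulrDr PK PL PKb PLb !addr0.
by rewrite opprD addrACA subrr addr0.
Qed.

End UKLCorner.

Section Presentations.
Variables (F : fieldType) (q : F) (A B : algType F) (phi : {lrmorphism A -> B}).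

Lemma UKL_rel_morph (K Kb L Lb E Fg : A) : UKL_rel q K Kb L Lb E Fg ->
  UKL_rel q (phi K) (phi Kb) (phi L) (phi Lb) (phi E) (phi Fg).
Proof.
case=> [[[KKbK KbKKb KKb] [LLbL LbLLb LLb]] sum [KE LE KbE LbE] [KF LF KbF LbF] EF].
split.
- by split; split; rewrite -!rmorphM ?KKbK ?KbKKb ?KKb ?LLbL ?LbLLb ?LLb.
- by rewrite -!rmorphM -rmorphD sum rmorph1.
- by split; rewrite -!rmorphM ?KE ?LE ?KbE ?LbE; apply: linearZ.
- by split; rewrite -!rmorphM ?KF ?LF ?KbF ?LbF; apply: linearZ.
- by rewrite -!rmorphM -rmorphB EF -!rmorphD -rmorphB; apply: linearZ.
Qed.

Lemma Uq_rel_morph (k ki e f : A) : Uq_rel q k ki e f ->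
  Uq_rel q (phi k) (phi ki) (phi e) (phi f).
Proof.
case=> kki kik ke kf ef; split.
- by rewrite -rmorphM kki rmorph1.
- by rewrite -rmorphM kik rmorph1.
- by rewrite -!rmorphM ke; apply: linearZ.
- by rewrite -!rmorphM kf; apply: linearZ.
- by rewrite -!rmorphM -!rmorphB ef; apply: linearZ.
Qed.

End Presentations.

Section Extensionality.
Variables (F : fieldType) (q : F).

Lemma UKL_hom_ext (A : algType F) (K Kb L Lb E Fg : A) :
  is_UKL q K Kb L Lb E Fg -> forall (B : algType F) (phi psi : {lrmorphism A -> B}),
  [/\ phi K = psi K, phi Kb = psi Kb, phi L = psi L, phi Lb = psi Lb
    & phi E = psi E /\ phi Fg = psi Fg] -> forall x, phi x = psi x.
Proof.
move=> [rel univ] B phi psi [eK eKb eL eLb [eE eF]].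
have [_ uniq] := univ B _ _ _ _ _ _ (UKL_rel_morph phi rel).
by apply: uniq; split.
Qed.

Lemma Uq_hom_ext (U : algType F) (k ki e f : U) :
  is_Uq q k ki e f -> forall (B : algType F) (phi psi : {lrmorphism U -> B}),
  [/\ phi k = psi k, phi ki = psi ki, phi e = psi e & phi f = psi f] ->
  forall x, phi x = psi x.
Proof.
move=> [rel univ] B phi psi [ek eki ee ef].
have [_ uniq] := univ B _ _ _ _ (Uq_rel_morph phi rel).
by apply: uniq; split.
Qed.

End Extensionality.

(* P = K Kb is central: conjugation by the involution P - Q fixes the
   generators, hence is the identity. *)
Lemma UKL_central (F : fieldType) (q : F) (A : algType F) (K Kb L Lb E Fg : A) :
  (2%:R : F) != 0 -> q != 0 -> is_UKL q K Kb L Lb E Fg -> central (K * Kb).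
Proof.
move=> two q_neq0 hA x.
have PP := UKL_idem hA.1; have PQ1 := UKL_sum hA.1.
have uu := reflection_sqr PP PQ1.
have [cK cKb cL cLb [cE cF]] := UKL_comm_gens q_neq0 hA.1.
have conj_trivial y : conjugation_lrmorphism uu uu y = idfun y.
  apply: (UKL_hom_ext hA); split; try split; apply: (conjugation_fixes uu);
    exact: (reflection_commute PQ1).
apply: (commute_of_reflection PQ1 two).
by rewrite /GRing.comm -[x in LHS]conj_trivial /= /conjugation !mulrA uu mul1r.
Qed.

Lemma Uq_pair_UKL_rel (F : fieldType) (q : F) (U : algType F) (k ki e f : U) :
  q != 0 -> Uq_rel q k ki e f ->
  UKL_rel q ((k, 0) : (U * U)%type) (ki, 0) (0, k) (0, ki) (e, e) (f, f).
Proof.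
move=> q_neq0 [kki kik ke kf ef].
have q2 : q ^+ 2 != 0 by rewrite expf_neq0.
have kie := inv_qcomm q2 kki kik ke.
have kif : ki * f = q ^+ 2 *: (f * ki).
  by rewrite -[q ^+ 2]invrK; apply: (inv_qcomm _ kki kik); rewrite ?invr_neq0.
split.
- by split; split; congr pair; rewrite /= ?kki ?kik ?mul1r ?mulr0.
- by congr pair; rewrite /= kki !mulr0 ?addr0 ?add0r.
- by split; congr pair; rewrite /= ?ke ?kie ?mulr0 ?mul0r ?scaler0.
- by split; congr pair; rewrite /= ?kf ?kif ?mulr0 ?mul0r ?scaler0.
- by congr pair; rewrite /= ef ?addr0 ?add0r.
Qed.

Section InverseIsomorphism.
Variables (F : fieldType) (q : F) (A U : algType F) (K Kb L Lb E Fg : A) (k ki e f : U).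
Hypotheses (hA : is_UKL q K Kb L Lb E Fg) (hU : is_Uq q k ki e f).
Local Notation P := (K * Kb).
Local Notation Q := (L * Lb).
Hypothesis Pc : central P.

Variables (phi : {lrmorphism A -> (U * U)%type}) (a1 a2 : {lrmorphism U -> A}).
Hypothesis phi_gens : [/\ phi K = (k, 0), phi Kb = (ki, 0), phi L = (0, k),
  phi Lb = (0, ki) & phi E = (e, e) /\ phi Fg = (f, f)].
Hypothesis a1_gens : [/\ a1 k = K + Q, a1 ki = Kb + Q, a1 e = P * E & a1 f = P * Fg].
Hypothesis a2_gens : [/\ a2 k = L + P, a2 ki = Lb + P, a2 e = Q * E & a2 f = Q * Fg].

Lemma phi_P : phi P = (1, 0).
Proof.
have [[kki _ _ _ _] _] := hU; have [phiK phiKb _ _ _] := phi_gens.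
by rewrite rmorphM /= phiK phiKb; congr pair; rewrite /= ?mulr0.
Qed.

Lemma phi_Q : phi Q = (0, 1).
Proof.
have [[kki _ _ _ _] _] := hU; have [_ _ phiL phiLb _] := phi_gens.
by rewrite rmorphM /= phiL phiLb; congr pair; rewrite /= ?mul0r.
Qed.

Lemma phi_Pmul x : phi (P * x) = (1, 0) * phi x.
Proof. by rewrite rmorphM /= phi_P. Qed.

Lemma phi_Qmul x : phi (Q * x) = (0, 1) * phi x.
Proof. by rewrite rmorphM /= phi_Q. Qed.

Definition glue_inverse : {lrmorphism (U * U)%type -> A} :=
  glue_lrmorphism Pc (UKL_idem hA.1) (UKL_sum hA.1) a1 a2.

(* glue_inverse is a left inverse: glue_inverse o phi fixes the generators. *)
Lemma glue_phi x : glue_inverse (phi x) = x.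
Proof.
have PP := UKL_idem hA.1; have PQ1 := UKL_sum hA.1.
have QQ := compl_idem PP PQ1; have Qc := central_compl PQ1 Pc.
have PQ := compl_orth_l PP PQ1; have QP := compl_orth_r PP PQ1.
have [_ KP _ KbP] := UKL_absorb hA.1.
have [_ LQ _ LbQ] := UKL_absorb (UKL_rel_swap hA.1).
have [phiK phiKb phiL phiLb [phiE phiF]] := phi_gens.
have [a1k a1ki a1e a1f] := a1_gens; have [a2k a2ki a2e a2f] := a2_gens.
apply: (UKL_hom_ext hA (phi := glue_inverse \o phi) (psi := idfun)).
rewrite /= /glue /= phiK phiKb phiL phiLb phiE phiF /= a1k a1ki a2k a2ki a1e a1f a2e a2f.
rewrite !rmorph0 !mul0r !mulrDl KP KbP LQ LbQ QP PQ !addr0 !add0r.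
rewrite !(corner_central Pc PP) !(corner_central Qc QQ) -!mulrDl PQ1 !mul1r.
by split.
Qed.

(* The first factor of phi o a1 (resp. the second of phi o a2) fixes the
   generators of U, hence is the identity. *)
Lemma phi_a1 u : (phi (a1 u)).1 = u.
Proof.
have [phiK phiKb _ _ [phiE phiF]] := phi_gens; have [a1k a1ki a1e a1f] := a1_gens.
apply: (Uq_hom_ext hU (phi := fst \o phi \o a1) (psi := idfun)).
rewrite /= a1k a1ki a1e a1f !rmorphD /= phiK phiKb phi_Q !phi_Pmul phiE phiF.
by split; rewrite /= ?addr0 ?mul1r.
Qed.

Lemma phi_a2 v : (phi (a2 v)).2 = v.
Proof.
have [_ _ phiL phiLb [phiE phiF]] := phi_gens; have [a2k a2ki a2e a2f] := a2_gens.
apply: (Uq_hom_ext hU (phi := snd \o phi \o a2) (psi := idfun)).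
rewrite /= a2k a2ki a2e a2f !rmorphD /= phiL phiLb phi_P !phi_Qmul phiE phiF.
by split; rewrite /= ?addr0 ?mul1r.
Qed.

Lemma phi_glue z : phi (glue_inverse z) = z.
Proof.
case: z => u v; rewrite /= /glue /= rmorphD rmorphM /= phi_P rmorphM /= phi_Q.
case: (phi (a1 u)) (phi_a1 u) => [u1 u2] /= ->.
case: (phi (a2 v)) (phi_a2 v) => [v1 v2] /= ->.
by congr pair; rewrite /= ?mulr0 ?mulr1 ?addr0 ?add0r.
Qed.

End InverseIsomorphism.

Theorem proposition5 (C : numClosedFieldType) (q : C)
  (hq0 : q != 0) (hq1 : q != 1) (hqm1 : q != -1)
  (A : algType C) (K Kb L Lb E Fg : A) (hA : is_UKL q K Kb L Lb E Fg)
  (U : algType C) (k ki e f : U) (hU : is_Uq q k ki e f) :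
  let P := K * Kb in let Q := L * Lb in
  [/\ (* P, Q central idempotents *)
      [/\ P * P = P, Q * Q = Q, (forall x, P * x = x * P) & (forall x, Q * x = x * Q)],
      (* orthogonality *)
      P * Q = 0 /\ Q * P = 0,
      (* A = PAP (+) QAQ, direct sum of two two-sided ideals *)
      [/\ two_sided_ideal (in_corner P), two_sided_ideal (in_corner Q)
        & forall x : A, exists! yz : (A * A)%type,
            [/\ in_corner P yz.1, in_corner Q yz.2 & x = yz.1 + yz.2]]
    & (* algebra isomorphism A -> U (+) U *)
      exists phi : {lrmorphism A -> (U * U)%type},
        [/\ bijective phi,
            [/\ phi K = (k, 0), phi Kb = (ki, 0), phi (P * E) = (e, 0) & phi (P * Fg) = (f, 0)],
            [/\ phi L = (0, k), phi Lb = (0, ki), phi (Q * E) = (0, e) & phi (Q * Fg) = (0, f)]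
          & phi P = (1, 0) /\ phi Q = (0, 1)]].
Proof.
move=> P Q; have [rel univ] := hA.
have two : (2%:R : C) != 0 by rewrite pnatr_eq0.
have PP : P * P = P := UKL_idem rel.
have PQ1 : P + Q = 1 := UKL_sum rel.
have Pc : central P := UKL_central two hq0 hA.
have Qc : central Q := central_compl PQ1 Pc.
have QQ : Q * Q = Q := compl_idem PP PQ1.
have [phi phi_gens] := (univ _ _ _ _ _ _ _ (Uq_pair_UKL_rel hq0 hU.1)).1.
have [a1 a1_gens] := (hU.2 _ _ _ _ _ (UKL_corner_rel rel Pc)).1.
have [a2 a2_gens] := (hU.2 _ _ _ _ _ (UKL_corner_rel (UKL_rel_swap rel) Qc)).1.
have [phiK phiKb phiL phiLb [phiE phiF]] := phi_gens.
split=> //.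
- by split; [exact: compl_orth_l | exact: compl_orth_r].
- by split; [exact: corner_ideal | exact: corner_ideal | exact: corner_decomposition].
exists phi; split.
- exists (glue_inverse hA Pc a1 a2).
    exact: (glue_phi hA Pc phi_gens a1_gens a2_gens).
  exact: (phi_glue hA hU Pc phi_gens a1_gens a2_gens).
- by split; rewrite // (phi_Pmul hU phi_gens) ?phiE ?phiF;
    congr pair; rewrite /= ?mul1r ?mul0r.
- by split; rewrite // (phi_Qmul hU phi_gens) ?phiE ?phiF;
    congr pair; rewrite /= ?mul1r ?mul0r.
- by split; [exact: (phi_P hU phi_gens) | exact: (phi_Q hU phi_gens)].
Qed.
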